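(* Let $V=W\times D$ be a direct product of finite-dimensional real vector spaces, let $\theta$ be the pullback to $V$ of a volume form in $W$ and $\zeta$ the pullback to $V$ of an indivisible exterior form in $D$. Then the divisibility space of the exterior $p$-form $\mu=\theta\wedge\zeta$ is $\{0\}\times D$.
   Context: A volume form in a vector space is a nonzero form of top degree (a nonzero scalar if the dimension is $0$). The divisibility space of an exterior form $\mu$ in $V$ is the common kernel of all $1$-forms $\xi\in V^*$ with $\xi\wedge\mu=0$ (for a nonzero $0$-form it is $V$). An exterior form in $D$ is indivisible if its divisibility space is all of $D$, i.e. $\xi\wedge\zeta\neq0$ for all nonzero $\xi\in D^*$. *)

From HB Require Import structures.
From mathcomp Require Import all_boot all_order all_algebra.
From mathcomp Require Import perm.
Set Implicit Arguments. Unset Strict Implicit. Unset Printing Implicit Defensive.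
Import GRing.Theory.
Local Open Scope ring_scope.

(* An exterior k-form on V is represented by its action on k-tuples of
   vectors: a multilinear alternating map ('I_k -> V) -> R. *)
Definition xform (R : Type) (V : Type) (k : nat) := ('I_k -> V) -> R.

Definition upd (V : Type) (k : nat) (x : 'I_k -> V) (i : 'I_k) (v : V) : 'I_k -> V :=
  fun j => if j == i then v else x j.

Definition multilinear (R : nzRingType) (V : lmodType R) (k : nat) (f : xform R V k) :=
  forall (x : 'I_k -> V) (i : 'I_k) (a : R) (u w : V),
    f (upd x i (a *: u + w)) = a * f (upd x i u) + f (upd x i w).

Definition alternating (R : nzRingType) (V : Type) (k : nat) (f : xform R V k) :=
  forall (x : 'I_k -> V) (i j : 'I_k), i != j -> x i = x j -> f x = 0.

Definition is_form (R : nzRingType) (V : lmodType R) (k : nat) (f : xform R V k) :=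
  multilinear f /\ alternating f.

Definition form_zero (R : nzRingType) (V : Type) (k : nat) (f : xform R V k) :=
  forall x, f x = 0.

(* wedge product (alternation convention with 1/(p! q!)) *)
Definition wedge (R : fieldType) (V : Type) (p q : nat)
    (a : xform R V p) (b : xform R V q) : xform R V (p + q) :=
  fun x => ((p`!)%:R)^-1 * ((q`!)%:R)^-1 *
    \sum_(s : 'S_(p + q))
      (-1) ^+ (odd_perm s) * a (fun i => x (s (lshift q i)))
                             * b (fun j => x (s (rshift p j))).

Definition pullback (R : Type) (A B : Type) (k : nat) (f : A -> B) (a : xform R B k)
  : xform R A k := fun x => a (fun i => f (x i)).

Definition eval1 (R : Type) (V : Type) (xi : xform R V 1) (v : V) : R :=
  xi (fun _ => v).

Definition divspace (R : fieldType) (V : lmodType R) (k : nat) (mu : xform R V k)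
  : V -> Prop :=
  fun v => forall xi : xform R V 1, is_form xi -> form_zero (wedge xi mu) ->
             eval1 xi v = 0.

Definition volume_form (R : fieldType) (W : vectType R) (omega : xform R W (\dim {:W}%VS)) :=
  is_form omega /\ ~ form_zero omega.

Definition indivisible (R : fieldType) (D : lmodType R) (k : nat) (zeta : xform R D k) :=
  forall v : D, divspace zeta v.

From HB Require Import structures.
From mathcomp Require Import all_boot all_order all_algebra.
From mathcomp Require Import perm.
From mathcomp Require Import ring.
From Stdlib Require Import Classical FunctionalExtensionality.
Set Implicit Arguments. Unset Strict Implicit. Unset Printing Implicit Defensive.
Import GRing.Theory Num.Theory.
Local Open Scope ring_scope.

(* Write n = dim W and mu = theta /\ zeta.  If v.1 <> 0, choose a coordinate form
   alpha on W with alpha v.1 <> 0; then xi = alpha o fst satisfies xi /\ mu = 0.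
   By multilinearity it suffices to check this on vectors each lying in W x 0 or in
   0 x D: if more than n of them lie in W they are dependent, and otherwise every
   term of the expansion of xi /\ mu along its 1-form slot feeds theta fewer than n
   vectors with a nonzero W-component.  Conversely, let xi /\ mu = 0 and let beta
   be the restriction of xi to D.  Evaluating xi /\ mu on (e_1,0), ..., (e_n,0),
   (0,y_0), ..., (0,y_q) with omega e <> 0, only the terms in which xi eats some
   (0,y_j) survive, and they add up to a nonzero multiple of (beta /\ zeta) y.
   Hence beta /\ zeta = 0, and indivisibility of zeta gives xi v = beta v.2 = 0
   whenever v.1 = 0. *)

Section Update.
Variables (V : Type) (k : nat).
Implicit Types (x : 'I_k -> V) (i j : 'I_k).

Lemma upd_same x i v : upd x i v i = v.
Proof. by rewrite /upd eqxx. Qed.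

Lemma upd_other x i j v : j != i -> upd x i v j = x j.
Proof. by rewrite /upd => /negbTE ->. Qed.

Lemma upd_id x i : upd x i (x i) = x.
Proof. by apply: functional_extensionality => j; rewrite /upd; case: eqP => // ->. Qed.

Lemma updC x i j u w : i != j -> upd (upd x i u) j w = upd (upd x j w) i u.
Proof.
move=> ij; apply: functional_extensionality => l; rewrite /upd.
by case: (eqVneq l j) => [->|//]; rewrite eq_sym (negbTE ij).
Qed.

End Update.

Section Multilinear.
Variables (R : nzRingType) (V : lmodType R) (k : nat) (f : xform R V k).
Hypothesis fM : multilinear f.

Lemma multilinearD x i u w : f (upd x i (u + w)) = f (upd x i u) + f (upd x i w).
Proof. by rewrite -[u]scale1r fM mul1r scale1r. Qed.

Lemma multilinear0 x i : x i = 0 -> f x = 0.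
Proof.
move=> xi0; rewrite -(upd_id x i) xi0.
by apply: (@addrI _ (f (upd x i 0))); rewrite -multilinearD !addr0.
Qed.

Lemma multilinear_sum (I : finType) (c : I -> R) (v : I -> V) x i :
  f (upd x i (\sum_j c j *: v j)) = \sum_j c j * f (upd x i (v j)).
Proof.
apply: (big_rec2 (fun w r => f (upd x i w) = r)).
  by apply: (multilinear0 (i := i)); rewrite upd_same.
by move=> j w r _ <-; rewrite fM.
Qed.

Lemma multilinear_eq0_decomp (P : pred V) :
  (forall v, exists2 u, P u & P (v - u)) ->
  (forall x, (forall i, P (x i)) -> f x = 0) -> forall x, f x = 0.
Proof.
move=> decomp fP.
suff fP_from m x : (forall i : 'I_k, (m <= i)%N -> P (x i)) -> f x = 0.
  by move=> x; apply: (fP_from k) => i; rewrite leqNgt ltn_ord.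
elim: m x => [|m IH] x xP; first by apply: fP => i; apply: xP.
have [mk|km] := ltnP m k; last first.
  by apply: IH => i; rewrite leqNgt (leq_trans (ltn_ord i) km).
pose i0 := Ordinal mk; have [u Pu Pv] := decomp (x i0).
have updP w : P w -> forall i : 'I_k, (m <= i)%N -> P (upd x i0 w i).
  move=> Pw i mi; have [->|ii0] := eqVneq i i0; first by rewrite upd_same.
  rewrite upd_other //; apply: xP; rewrite ltn_neqAle mi andbT.
  by apply: contra ii0 => /eqP mi'; apply/eqP/val_inj; rewrite /= mi'.
have -> : x = upd x i0 (u + (x i0 - u)) by rewrite subrKC upd_id.
by rewrite multilinearD !IH ?addr0 //; apply: updP.
Qed.

Hypothesis fA : alternating f.

Lemma alternating_tperm x i j : i != j -> f (fun l => x (tperm i j l)) = - f x.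
Proof.
move=> ij; pose g a b := f (upd (upd x i a) j b).
have g0 a : g a a = 0.
  by apply: (fA ij); rewrite upd_same upd_other ?upd_same // eq_sym.
have gDl a a' b : g (a + a') b = g a b + g a' b.
  by rewrite /g !(updC _ _ _ ij) multilinearD.
have gDr a b b' : g a (b + b') = g a b + g a b' by rewrite /g multilinearD.
have := g0 (x i + x j); rewrite gDl !gDr !g0 add0r addr0.
have -> : g (x i) (x j) = f x by rewrite /g !upd_id.
have -> : g (x j) (x i) = f (fun l => x (tperm i j l)).
  congr f; apply: functional_extensionality => l; rewrite /upd.
  case: tpermP => [->|->|/eqP/negbTE li /eqP/negbTE lj];
    by rewrite ?(negbTE ij) ?li ?lj ?eqxx.
by move/eqP; rewrite addrC addr_eq0 => /eqP.
Qed.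

Lemma alternating_perm x (s : 'S_k) : f (fun l => x (s l)) = (-1) ^+ odd_perm s * f x.
Proof.
case: (prod_tpermP s) => ts -> {s}; elim: ts x => [|t ts IH] x /=.
  move=> _; rewrite big_nil odd_perm1 mul1r; congr f.
  by apply: functional_extensionality => l; rewrite perm1.
move=> /andP[dt dts]; rewrite big_cons odd_permM odd_tperm dt signr_addb.
rewrite expr1 mulN1r mulNr -IH //; set s := (\prod_(t <- ts) _)%g.
have /= <- := alternating_tperm (fun m => x (s m)) dt.
by congr f; apply: functional_extensionality => l; rewrite permM.
Qed.

End Multilinear.

Lemma alternating1 (R : nzRingType) (V : Type) (f : xform R V 1) : alternating f.
Proof. by move=> x i j; rewrite (ord1 i) (ord1 j) eqxx. Qed.

Lemma alternating_dependent (R : idomainType) (V : lmodType R) k (f : xform R V k)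
    m (p : 'I_m -> 'I_k) (c : 'I_m -> R) x j0 :
  multilinear f -> alternating f -> injective p ->
  \sum_j c j *: x (p j) = 0 -> c j0 != 0 -> f x = 0.
Proof.
move=> fM fA p_inj sum0 cj0.
have : 0 = c j0 * f x.
  rewrite -(multilinear0 fM (x := upd x (p j0) 0) (i := p j0)) ?upd_same //.
  rewrite -sum0 multilinear_sum // (bigD1 j0) //= upd_id big1 ?addr0 // => j jj0.
  rewrite (fA _ (p j0) (p j)) ?mulr0 //; first by rewrite (inj_eq p_inj) eq_sym.
  by rewrite upd_same upd_other // (inj_eq p_inj).
by move/esym/eqP; rewrite mulf_eq0 (negbTE cj0) => /eqP.
Qed.

Definition form1 (R V : Type) (alpha : V -> R) : xform R V 1 := fun y => alpha (y ord0).

Lemma form1_is_form (R : nzRingType) (V : lmodType R) (alpha : {scalar V}) :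
  is_form (form1 alpha).
Proof.
split; last exact: alternating1.
by move=> x i a u w; rewrite /form1 (ord1 i) !upd_same linearP.
Qed.

Lemma pullback_multilinear (R : nzRingType) (A B : lmodType R) k (h : A -> B)
    (g : xform R B k) :
  linear h -> multilinear g -> multilinear (pullback h g).
Proof.
move=> hL gM x i a u w; rewrite /pullback.
have updE v : (fun l => h (upd x i v l)) = upd (fun l => h (x l)) i (h v).
  by apply: functional_extensionality => l; rewrite /upd; case: eqP.
by rewrite !updE hL gM.
Qed.

Lemma big_lift_perm (T : nmodType) n (i j : 'I_n.+1) (F : 'S_n.+1 -> T) :
  \sum_(s : 'S_n.+1 | s i == j) F s = \sum_(t : 'S_n) F (lift_perm i j t).
Proof.
rewrite (reindex (lift_perm i j)) /=; last first.
  pose unl (s : 'S_n.+1) m := odflt m (unlift (s i) (s (lift i m))).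
  have unlK (s : 'S_n.+1) m : lift (s i) (unl s m) = s (lift i m).
    rewrite /unl; case: unliftP => [m' -> //|/perm_inj/eqP].
    by rewrite eq_sym (negbTE (neq_lift i m)).
  have unl_inj (s : 'S_n.+1) : injective (unl s).
    by move=> m1 m2 /(congr1 (lift (s i))); rewrite !unlK => /perm_inj/lift_inj.
  exists (fun s => perm (unl_inj s)) => [t _ | s /eqP si].
    apply/permP => m; apply: (@lift_inj _ j); rewrite permE.
    by rewrite -{1}(lift_perm_id i j t) unlK lift_perm_lift.
  apply/permP => m; case: (unliftP i m) => [m'|] ->; last by rewrite lift_perm_id.
  by rewrite lift_perm_lift permE -si unlK.
by apply: eq_bigl => t; rewrite lift_perm_id eqxx.
Qed.

Section Wedge.
Variable R : numFieldType.

Lemma wedge_alternating (V : Type) p q (a : xform R V p) (b : xform R V q) :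
  alternating (wedge a b).
Proof.
move=> x i j ij xij; rewrite /wedge.
set S := \sum_(s : 'S_(p + q)) _.
suff -> : S = 0 by rewrite mulr0.
have xt m : x (tperm i j m) = x m by case: tpermP => [->|->|].
have SN : S = - S.
  rewrite {1}/S (reindex_inj (mulIg (tperm i j))) /S -sumrN.
  apply: eq_bigr => s _; rewrite odd_permM odd_tperm ij signr_addb expr1 mulrN1 !mulNr.
  by congr (- (_ * _ * _)); [congr a | congr b];
    apply: functional_extensionality => l; rewrite permM xt.
have : S *+ 2 = 0 by rewrite mulr2n {1}SN addNr.
by move/eqP; rewrite mulrn_eq0 => /eqP.
Qed.

Lemma wedge_multilinear (V : lmodType R) p q (a : xform R V p) (b : xform R V q) :
  multilinear a -> multilinear b -> multilinear (wedge a b).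
Proof.
move=> aM bM x i c u w; rewrite /wedge mulrCA -mulrDr; congr (_ * _).
rewrite mulr_sumr -big_split /=; apply: eq_bigr => s _.
have slot r (sh : 'I_r -> 'I_(p + q)) l0 : injective sh -> s (sh l0) = i ->
    forall v, (fun l => upd x i v (s (sh l))) = upd (fun l => x (s (sh l))) l0 v.
  move=> sh_inj sl0 v; apply: functional_extensionality => l.
  by rewrite /upd -sl0 (inj_eq perm_inj) (inj_eq sh_inj).
have other r (sh : 'I_r -> 'I_(p + q)) : (forall l, s (sh l) != i) ->
    forall v, (fun l => upd x i v (s (sh l))) = (fun l => x (s (sh l))).
  by move=> si v; apply: functional_extensionality => l; rewrite upd_other.
have [l0 sl0|l0 sl0] := split_ordP (s^-1 i)%g.
- have si : s (lshift q l0) = i by rewrite -sl0 permKV.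
  have sr l : s (rshift p l) != i by rewrite -si (inj_eq perm_inj) eq_rlshift.
  have EA := slot _ _ l0 (@lshift_inj _ _) si; have EB := other _ _ sr.
  by rewrite !EA !EB aM mulrDr mulrDl mulrCA !mulrA.
- have si : s (rshift p l0) = i by rewrite -sl0 permKV.
  have sl l : s (lshift q l) != i by rewrite -si (inj_eq perm_inj) eq_lrshift.
  have EB := slot _ _ l0 (@rshift_inj _ _) si; have EA := other _ _ sl.
  by rewrite !EA !EB bM mulrDr mulrCA.
Qed.

Lemma wedge1E (V : lmodType R) k (xi : xform R V 1) (M : xform R V k) :
  multilinear M -> alternating M -> forall x : 'I_(1 + k) -> V,
  wedge xi M x =
    \sum_(i < k.+1) (-1) ^+ i * xi (fun _ => x i) * M (fun j => x (lift i j)).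
Proof.
move=> MM MA x; rewrite /wedge (partition_big (fun s : 'S_k.+1 => s ord0) predT) //=.
rewrite mulr_sumr; apply: eq_bigr => j _; rewrite big_lift_perm.
have termE (t : 'S_k) : (-1) ^+ odd_perm (lift_perm ord0 j t) *
      xi (fun i => x (lift_perm ord0 j t (lshift k i))) *
      M (fun m => x (lift_perm ord0 j t (rshift 1 m))) =
    (-1) ^+ j * xi (fun _ => x j) * M (fun m => x (lift j m)).
  have lshift0 (i : 'I_1) : lshift k i = ord0 by apply: val_inj; rewrite /= (ord1 i).
  have rshift1 (m : 'I_k) : rshift 1 m = lift ord0 m by apply: val_inj.
  have -> : (fun i : 'I_1 => x (lift_perm ord0 j t (lshift k i))) = (fun _ => x j).
    by apply: functional_extensionality => i; rewrite lshift0 lift_perm_id.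
  have -> : (fun m => x (lift_perm ord0 j t (rshift 1 m))) = (fun m => x (lift j (t m))).
    by apply: functional_extensionality => m; rewrite rshift1 lift_perm_lift.
  have /= -> := alternating_perm MM MA (fun m => x (lift j m)) t.
  rewrite odd_lift_perm /= signr_addb.
  by rewrite signr_odd mulrACA -[_ * _ * (-1) ^+ t]mulrA -expr2 sqrr_sign mulr1 mulrA.
rewrite (eq_bigr _ (fun t _ => termE t)) sumr_const card_Sn (_ : 1`! = 1) // invr1 mul1r.
set c := _ * M _; by rewrite -[c *+ _]mulr_natl mulKf // pnatr_eq0 -lt0n fact_gt0.
Qed.

End Wedge.

Definition block_perm a b : pred 'S_(a + b) :=
  [pred s : 'S_(a + b) | [forall l, (s (lshift b l) < a)%N]
                         && [forall l, (a <= s (rshift a l))%N]].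
Arguments block_perm : clear implicits.

(* Actually [#|block_perm a b| = a`! * b`!], so this is 1; only its nonvanishing
   is needed. *)
Definition block_coef (R : numFieldType) a b : R :=
  (a`!%:R)^-1 * (b`!%:R)^-1 * #|block_perm a b|%:R.

Lemma block_coef_neq0 (R : numFieldType) a b : block_coef R a b != 0.
Proof.
rewrite /block_coef !mulf_neq0 ?invr_eq0 ?pnatr_eq0 -?lt0n ?fact_gt0 //.
apply/card_gt0P; exists 1%g; rewrite inE.
by apply/andP; split; apply/forallP => l; rewrite perm1 /= ?ltn_ord ?leq_addr.
Qed.

Lemma block_permP a b (s : 'S_(a + b)) : s \in block_perm a b ->
  exists (pi : 'S_a) (rho : 'S_b),
    (forall l, s (lshift b l) = lshift b (pi l)) /\
    (forall l, s (rshift a l) = rshift a (rho l)).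
Proof.
case/andP => /forallP sl /forallP sr.
have pi_inj : injective (fun l => Ordinal (sl l)).
  by move=> l1 l2 /(congr1 val) /= /val_inj /perm_inj /lshift_inj.
have rho_inj : injective (fun l => Ordinal (split_subproof (sr l))).
  move=> l1 l2 /(congr1 val) /= /(congr1 (addn a)).
  by rewrite !subnKC // => /val_inj /perm_inj /rshift_inj.
exists (perm pi_inj), (perm rho_inj).
by split=> l; apply: val_inj; rewrite /= permE //= subnKC.
Qed.

Lemma odd_perm_block a b (s : 'S_(a + b)) (pi : 'S_a) (rho : 'S_b) :
  (forall l, s (lshift b l) = lshift b (pi l)) ->
  (forall l, s (rshift a l) = rshift a (rho l)) ->
  odd_perm s = odd_perm pi (+) odd_perm rho.
Proof.
move=> sl sr; apply: (@signr_inj int); rewrite /= signr_addb.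
rewrite -!det_perm -(det_ublock _ 0); congr (\det _); apply/matrixP => i j.
case: (split_ordP i) => i' ->; case: (split_ordP j) => j' ->;
  by rewrite ?block_mxEul ?block_mxEur ?block_mxEdl ?block_mxEdr /perm_mx !mxE
    ?sl ?sr ?eq_lshift ?eq_rshift ?eq_lrshift ?eq_rlshift.
Qed.

Lemma card_lift_lt k (P : pred 'I_k.+1) i :
  P i -> (#|[set m | P (lift i m)]| < #|[set m | P m]|)%N.
Proof.
move=> Pi; rewrite -(card_imset _ (@lift_inj _ i)) (cardsD1 i [set m | P m]).
rewrite inE Pi add1n ltnS.
apply/subset_leq_card/subsetP => _ /imsetP[m + ->]; rewrite !inE => Pm.
by rewrite Pm andbT eq_sym neq_lift.
Qed.

Section Product.
Variables (R : numFieldType) (W D : lmodType R).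

Lemma inr_linear : linear (fun d : D => ((0 : W), d)).
Proof. by move=> a u w; congr pair; rewrite /= scaler0 addr0. Qed.

Lemma wedge_pullback_few_eq0 a b (A : xform R W a) (B : xform R D b) z :
  multilinear A -> (#|[set m | (z m).1 != 0%R]| < a)%N ->
  wedge (pullback fst A) (pullback snd B) z = 0.
Proof.
move=> AM few; rewrite /wedge big1 ?mulr0 // => s _.
have /existsP[l /eqP zl0] : [exists l, (z (s (lshift b l))).1 == 0].
  apply: contraLR few; rewrite negb_exists -leqNgt => /forallP nz.
  have sl_inj : injective (fun l => s (lshift b l)) by move=> l1 l2 /perm_inj/lshift_inj.
  rewrite -{1}(card_ord a) -(card_imset _ sl_inj) subset_leq_card //.
  by apply/subsetP => _ /imsetP[l _ ->]; rewrite inE nz.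
by rewrite /pullback (multilinear0 AM (i := l)) ?mulr0 ?mul0r.
Qed.

Lemma wedge_pullback_lift_eq0 a b (A : xform R W a) (B : xform R D b)
    (x : 'I_(a + b).+1 -> W * D) i :
  multilinear A -> (x i).1 != 0 -> (#|[set m | (x m).1 != 0%R]| <= a)%N ->
  wedge (pullback fst A) (pullback snd B) (fun m => x (lift i m)) = 0.
Proof.
move=> AM xi_nz xW; apply: wedge_pullback_few_eq0 => //.
exact: leq_trans (card_lift_lt (P := fun m => (x m).1 != 0) xi_nz) xW.
Qed.

Lemma wedge_pullback_block a b (A : xform R W a) (B : xform R D b) e f z :
  is_form A -> is_form B ->
  (forall l, z (lshift b l) = (e l, 0)) -> (forall l, z (rshift a l) = (0, f l)) ->
  wedge (pullback fst A) (pullback snd B) z = block_coef R a b * A e * B f.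
Proof.
move=> [AM AA] [BM BA] zl zr.
have z1 (m : 'I_(a + b)) : ~~ (m < a)%N -> (z m).1 = 0.
  by case: (split_ordP m) => l ->; rewrite ?zr //= ltn_ord.
have z2 (m : 'I_(a + b)) : (m < a)%N -> (z m).2 = 0.
  by case: (split_ordP m) => l ->; rewrite ?zl //= ltnNge leq_addr.
rewrite /wedge /block_coef -!mulrA; congr (_ * (_ * _)).
rewrite (bigID (mem (block_perm a b))) /= [X in _ + X]big1 ?addr0 => [|s]; last first.
  move=> /nandP[/forallPn[l sl]|/forallPn[l sl]].
    by rewrite /pullback (multilinear0 AM (i := l)) ?mulr0 ?mul0r // z1.
  by rewrite /pullback (multilinear0 BM (i := l)) ?mulr0 // z2 // ltnNge.
rewrite (eq_bigr (fun _ => A e * B f)) ?sumr_const ?mulr_natl // => s.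
move=> /block_permP[pi [rho [sl sr]]].
rewrite /pullback (odd_perm_block sl sr) signr_addb.
have -> : (fun l => (z (s (lshift b l))).1) = (fun l => e (pi l)).
  by apply: functional_extensionality => l; rewrite sl zl.
have -> : (fun l => (z (s (rshift a l))).2) = (fun l => f (rho l)).
  by apply: functional_extensionality => l; rewrite sr zr.
rewrite (alternating_perm AM AA) (alternating_perm BM BA).
by rewrite -!mulrA [(-1) ^+ odd_perm rho * _]mulrCA signrMK mulrCA signrMK.
Qed.

End Product.

Lemma alternating_fst_overfull (R : fieldType) (W : vectType R) (D : lmodType R) k
    (F : xform R (W * D) k) (x : 'I_k -> W * D) :
  multilinear F -> alternating F -> (forall i, (x i).1 != 0 -> (x i).2 = 0) ->
  (\dim {:W} < #|[set i | (x i).1 != 0%R]|)%N -> F x = 0.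
Proof.
move=> FM FA xW; set n := \dim _ => nP.
pose p (j : 'I_n.+1) := enum_val (widen_ord nP j).
have p_inj : injective p by move=> j1 j2 /enum_val_inj/(congr1 val)/= /val_inj.
have pW j : (x (p j)).1 != 0 by have := enum_valP (widen_ord nP j); rewrite inE.
pose X := [tuple (x (p j)).1 | j < n.+1].
have /negP X_dep : ~~ free X.
  rewrite /free size_tuple; apply: contraTneq (dimvS (subvf <<X>>)) => ->.
  by rewrite ltnn.
have [c sum0 [j0 cj0]] : exists2 c : 'I_n.+1 -> R,
    \sum_j c j *: X`_j = 0 & exists j0, c j0 != 0.
  apply: NNPP => indep; apply/X_dep/freeP => c sum0 j; apply: NNPP => /eqP cj.
  by apply: indep; exists c => //; exists j.
apply: (alternating_dependent FM FA p_inj _ cj0).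
have sum1 : (\sum_j c j *: x (p j)).1 = 0.
  by rewrite raddf_sum (eq_bigr (fun j => c j *: X`_j)) // => j _; rewrite nth_mktuple.
have sum2 : (\sum_j c j *: x (p j)).2 = 0.
  by rewrite raddf_sum big1 // => j _; rewrite /= xW ?scaler0.
by move: sum1 sum2; case: (\sum_j _) => u w /= -> ->.
Qed.

Lemma wedge_form1_fst_eq0 (R : numFieldType) (W : vectType R) (D : lmodType R) q
    (omega : xform R W (\dim {:W})) (zeta : xform R D q) (alpha : {scalar W}) :
  multilinear omega -> multilinear zeta ->
  form_zero (wedge (pullback fst (form1 alpha))
                   (wedge (pullback fst omega) (pullback snd zeta))).
Proof.
move=> omM zeM; set mu := wedge (pullback fst omega) _.
set xi := pullback fst (form1 alpha).
have muM : multilinear mu.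
  by apply: wedge_multilinear; apply: pullback_multilinear.
have xiM : multilinear xi.
  by apply: pullback_multilinear => //; case: (form1_is_form alpha).
pose pure (v : W * D) := (v.1 == 0) || (v.2 == 0).
apply: (multilinear_eq0_decomp (wedge_multilinear xiM muM) (P := pure)).
  by move=> [w d]; exists (w, 0); rewrite /pure /= ?eqxx ?orbT // subrr eqxx.
move=> x xP; have [many|few] := ltnP (\dim {:W}) #|[set i | (x i).1 != 0%R]|.
  apply: alternating_fst_overfull many.
  - exact: wedge_multilinear.
  - exact: wedge_alternating.
  - by move=> i /negbTE xi1; have := xP i; rewrite /pure xi1 => /eqP.
rewrite wedge1E //; last exact: wedge_alternating.
apply: big1 => i _; have [xi1|xi1] := eqVneq (x i).1 0.
  by rewrite /xi /pullback /form1 xi1 linear0 mulr0 mul0r.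
by rewrite /mu wedge_pullback_lift_eq0 ?mulr0.
Qed.

Section Frame.
Variables (R : numFieldType) (W D : lmodType R) (n q : nat).
Variables (e : 'I_n -> W) (y : 'I_q.+1 -> D).

Definition frame (m : 'I_(n + q).+1) : W * D :=
  match split (cast_ord (esym (addnS n q)) m) with
  | inl l => (e l, 0)
  | inr j => (0, y j)
  end.

Lemma frame_lshift l : frame (cast_ord (addnS n q) (lshift q.+1 l)) = (e l, 0).
Proof. by rewrite /frame cast_ordK (unsplitK (inl _ l)). Qed.

Lemma frame_rshift j : frame (cast_ord (addnS n q) (rshift n j)) = (0, y j).
Proof. by rewrite /frame cast_ordK (unsplitK (inr _ j)). Qed.

Lemma card_frame_fst : (#|[set m | (frame m).1 != 0%R]| <= n)%N.
Proof.
rewrite -[n in (_ <= n)%N]card_ord.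
apply: leq_trans (leq_imset_card (fun l => cast_ord (addnS n q) (lshift q.+1 l)) 'I_n).
apply/subset_leq_card/subsetP => m; rewrite inE /frame.
case: (split_ordP (cast_ord _ m)) => [l|j] mE /=; rewrite ?eqxx // => _.
by apply/imsetP; exists l => //; rewrite -mE cast_ordKV.
Qed.

Lemma wedge_frame (omega : xform R W n) (zeta : xform R D q) (xi : xform R (W * D) 1) :
  is_form omega -> is_form zeta -> (forall l, e l != 0) ->
  wedge xi (wedge (pullback fst omega) (pullback snd zeta)) frame =
  (-1) ^+ n * block_coef R n q * omega e *
    wedge (pullback (fun d => ((0 : W), d)) xi) zeta y.
Proof.
move=> [omM omA] [zeM zeA] e_nz.
have muM : multilinear (wedge (pullback fst omega) (pullback snd zeta)).
  by apply: wedge_multilinear; apply: pullback_multilinear.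
rewrite !wedge1E //; last exact: wedge_alternating.
rewrite (reindex (cast_ord (addnS n q))) /=; last first.
  by exists (cast_ord (esym (addnS n q))) => m _; rewrite ?cast_ordK ?cast_ordKV.
rewrite big_split_ord /= big1 ?add0r => [|l _]; last first.
  by rewrite wedge_pullback_lift_eq0 ?mulr0 ?frame_lshift ?e_nz ?card_frame_fst.
rewrite mulr_sumr; apply: eq_bigr => j _; rewrite frame_rshift.
rewrite (@wedge_pullback_block _ _ _ _ _ _ _ e (fun m => y (lift j m))) // => [|l|l].
- by rewrite exprD /pullback /=; ring.
- rewrite (_ : lift _ _ = cast_ord (addnS n q) (lshift q.+1 l)) ?frame_lshift //.
  by apply: val_inj; rewrite /= /bump leqNgt (leq_trans (ltn_ord l) (leq_addr _ _)).
- rewrite (_ : lift _ _ = cast_ord (addnS n q) (rshift n (lift j l))) ?frame_rshift //.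
  by apply: val_inj; rewrite /= /bump leq_add2l addnCA.
Qed.

End Frame.

Lemma wedge_pullback_inr_eq0 (R : numFieldType) (W D : lmodType R) n q
    (omega : xform R W n) (zeta : xform R D q) (xi : xform R (W * D) 1)
    (e : 'I_n -> W) :
  is_form omega -> is_form zeta -> omega e != 0 ->
  form_zero (wedge xi (wedge (pullback fst omega) (pullback snd zeta))) ->
  form_zero (wedge (pullback (fun d => ((0 : W), d)) xi) zeta).
Proof.
move=> omF zeF om_e xi_mu y.
have e_nz l : e l != 0.
  by apply: contraNneq om_e => el0; apply/eqP/(multilinear0 omF.1 el0).
have K_nz : (-1) ^+ n * block_coef R n q * omega e != 0.
  by rewrite mulf_neq0 // mulf_neq0 ?signr_eq0 ?block_coef_neq0.
apply: (mulfI K_nz); rewrite mulr0 -(wedge_frame y xi omF zeF e_nz); exact: xi_mu.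
Qed.

Theorem lemma3p6 (R : realFieldType) (W D : vectType R) (q : nat)
    (omega : xform R W (\dim {:W}%VS)) (zeta : xform R D q) :
  volume_form omega -> is_form zeta -> indivisible zeta ->
  forall v : (W * D)%type,
    divspace (wedge (pullback fst omega) (pullback snd zeta)) v <-> v.1 = 0.
Proof.
move=> [omF om_nz] zeF zeta_indiv v; split => [v_div | v1_0 xi xiF xi_mu].
- apply/eqP; apply: contraT => v1_nz.
  have /existsP[i0 ci0] : [exists i, coord (vbasis {:W}) i v.1 != 0].
    apply: contraR v1_nz; rewrite negb_exists => /forallP c0.
    rewrite (coord_vbasis (memvf v.1)) big1 // => i _.
    by rewrite (eqP (negbNE (c0 i))) scale0r.
  pose alpha := coord (vbasis {:W}) i0.
  have xiF : is_form (pullback (@fst W D) (form1 alpha)).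
    split; last exact: alternating1.
    by apply: pullback_multilinear => //; case: (form1_is_form alpha).
  have := v_div _ xiF (wedge_form1_fst_eq0 alpha omF.1 zeF.1).
  by rewrite /eval1 /pullback /form1 /alpha /= => /eqP; rewrite (negbTE ci0).
- have [e /eqP om_e] := not_all_ex_not _ _ om_nz.
  have betaF : is_form (pullback (fun d => ((0 : W), d)) xi).
    split; last exact: alternating1.
    by apply: pullback_multilinear xiF.1; exact: inr_linear.
  have := zeta_indiv v.2 _ betaF (wedge_pullback_inr_eq0 omF zeF om_e xi_mu).
  by rewrite /eval1 /pullback; case: v v1_0 => w d /= ->.
Qed.
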